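(* Let $G$ be a finite group and $T_G = \{(g,h,gh)\mid g,h\in G\}\subseteq G^3$. Then $T_G$ admits a Mal'tsev polymorphism if and only if $G$ is abelian.
   Context: For an $n$-ary relation $R\subseteq A^n$, a $d$-ary polymorphism of $R$ is a map $f:A^d\to A$ such that whenever $d$ tuples $(x_{1,1},\dots,x_{1,n}),\dots,(x_{d,1},\dots,x_{d,n})$ lie in $R$, the tuple obtained by applying $f$ coordinatewise, $(f(x_{1,1},\dots,x_{d,1}),\dots,f(x_{1,n},\dots,x_{d,n}))$, also lies in $R$. A Mal'tsev polymorphism is a ternary polymorphism $f$ with $f(x,x,y)=f(y,x,x)=y$ for all $x,y\in A$. *)

From mathcomp Require Import all_boot all_fingroup.
Set Implicit Arguments. Unset Strict Implicit. Unset Printing Implicit Defensive.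
Local Open Scope group_scope.

Definition TG (gT : finGroupType) (G : {group gT}) (t : gT * gT * gT) : Prop :=
  [/\ t.1.1 \in G, t.1.2 \in G & t.2 = t.1.1 * t.1.2].

Definition is_polymorphism3 (gT : finGroupType) (G : {group gT})
    (R : gT * gT * gT -> Prop) (f : gT -> gT -> gT -> gT) : Prop :=
  (forall x y z, x \in G -> y \in G -> z \in G -> f x y z \in G) /\
  forall a b c : gT * gT * gT, R a -> R b -> R c ->
    R (f a.1.1 b.1.1 c.1.1, f a.1.2 b.1.2 c.1.2, f a.2 b.2 c.2).

Definition is_maltsev_polymorphism (gT : finGroupType) (G : {group gT})
    (R : gT * gT * gT -> Prop) (f : gT -> gT -> gT -> gT) : Prop :=
  is_polymorphism3 G R f /\
  forall x y, x \in G -> y \in G -> f x x y = y /\ f y x x = y.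

From mathcomp Require Import all_boot all_fingroup.
Set Implicit Arguments. Unset Strict Implicit. Unset Printing Implicit Defensive.
Local Open Scope group_scope.

(* Eckmann-Hilton.  If f is a polymorphism of T_G, then feeding it the triples
   (x1, x2, x1 x2), (1, 1, 1), (y1, y2, y1 y2) shows that m x y := f x 1 y
   satisfies the interchange law m (x1 x2) (y1 y2) = m x1 y1 * m x2 y2.  The
   Mal'tsev identities make 1 a two-sided unit for m, and then
   g h = m g h = h g.  Conversely, in an abelian group x y^-1 z is a group
   morphism G^3 -> G, hence preserves T_G, and it is always Mal'tsev. *)

Section MaltsevPolymorphismTG.

Variables (gT : finGroupType) (G : {group gT}).

Lemma TG_mul g h : g \in G -> h \in G -> TG G (g, h, g * h).
Proof. by move=> Gg Gh; split. Qed.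

Lemma polymorphism_TG_interchange f :
    is_polymorphism3 G (TG G) f ->
  forall x1 x2 y1 y2, x1 \in G -> x2 \in G -> y1 \in G -> y2 \in G ->
    f (x1 * x2) 1 (y1 * y2) = f x1 1 y1 * f x2 1 y2.
Proof.
move=> [_ polyf] x1 x2 y1 y2 Gx1 Gx2 Gy1 Gy2.
have TG1 : TG G (1, 1, 1) by rewrite -{3}(mulg1 1); apply: TG_mul.
by case: (polyf _ _ _ (TG_mul Gx1 Gx2) TG1 (TG_mul Gy1 Gy2)).
Qed.

Lemma interchange_unital_commute (m : gT -> gT -> gT) :
    (forall x1 x2 y1 y2, x1 \in G -> x2 \in G -> y1 \in G -> y2 \in G ->
       m (x1 * x2) (y1 * y2) = m x1 y1 * m x2 y2) ->
    {in G, forall x, m x 1 = x} -> {in G, forall y, m 1 y = y} ->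
  {in G &, forall g h, commute g h}.
Proof.
move=> mM mx1 m1y g h Gg Gh.
have mE : m g h = g * h by rewrite -{1}(mulg1 g) -{1}(mul1g h) mM ?mx1 ?m1y.
by rewrite /commute -mE -{1}(mul1g g) -{1}(mulg1 h) mM ?mx1 ?m1y.
Qed.

Definition maltsev_term (x y z : gT) := x * y^-1 * z.

Lemma maltsev_termM a1 a2 b1 b2 c1 c2 :
    abelian G -> a2 \in G -> b1 \in G -> b2 \in G -> c1 \in G ->
  maltsev_term (a1 * a2) (b1 * b2) (c1 * c2)
    = maltsev_term a1 b1 c1 * maltsev_term a2 b2 c2.
Proof.
move=> /centsP cGG Ga2 Gb1 Gb2 Gc1; rewrite /maltsev_term invMg.
have cG : commute (a2 * b2^-1) (b1^-1 * c1) by apply: cGG; rewrite groupM ?groupV.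
have -> : a1 * a2 * (b2^-1 * b1^-1) * (c1 * c2)
          = a1 * (a2 * b2^-1 * (b1^-1 * c1)) * c2 by rewrite !mulgA.
by rewrite cG !mulgA.
Qed.

Lemma maltsev_term_polymorphism :
  abelian G -> is_polymorphism3 G (TG G) maltsev_term.
Proof.
move=> cGG; split=> [x y z Gx Gy Gz | [[a1 a2] a3] [[b1 b2] b3] [[c1 c2] c3]].
  by rewrite !groupM ?groupV.
move=> [/= Ga1 Ga2 ->] [/= Gb1 Gb2 ->] [/= Gc1 Gc2 ->].
by split; rewrite /= ?maltsev_termM // /maltsev_term !groupM ?groupV.
Qed.

Lemma maltsev_termKV x y : maltsev_term x x y = y /\ maltsev_term y x x = y.
Proof. by rewrite /maltsev_term mulgV mul1g mulgKV. Qed.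

End MaltsevPolymorphismTG.

Theorem lemma2p3 (gT : finGroupType) (G : {group gT}) :
  (exists f : gT -> gT -> gT -> gT, is_maltsev_polymorphism G (@TG gT G) f)
  <-> abelian G.
Proof.
split=> [[f [polyf maltsevf]] | cGG].
- have fM := polymorphism_TG_interchange polyf.
  have f_x11 : {in G, forall x, f x 1 1 = x} by move=> x Gx; case: (maltsevf 1 x).
  have f_11y : {in G, forall y, f 1 1 y = y} by move=> y Gy; case: (maltsevf 1 y).
  have cG := @interchange_unital_commute _ _ (fun x y => f x 1 y) fM f_x11 f_11y.
  by apply/centsP=> g Gg h Gh; apply: cG.
- exists (@maltsev_term gT); split; first exact: maltsev_term_polymorphism.
  by move=> x y _ _; apply: maltsev_termKV.
Qed.
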